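(* Let $(s,\vec r)$ be a molecule with $N$ atoms and pairwise distinct positions, and let $r_c>\max_{i,j}\|\vec r_i-\vec r_j\|$, so that every local environment contains all atoms. Let $g$ be a function from local environments to $\mathbb{R}^{3\times 3}$ which is $\mathrm{O}(3)$-equivariant and such that $g(A)$ has rank $3$ for every local environment $A$ for which no $o\in\mathrm{O}(3)$, $o\neq I$, satisfies $\{(s',xo^T):(s',x)\in A\}=A$. Define $\vec E_i=g(\{(s_j,\vec r_i-\vec r_j): j=1,\dots,N\})$ and $\vec E=\sum_{i=1}^N\vec E_i$. If $\mathrm{rank}(\vec E_i)<3$ for some $i$, then $\mathrm{rank}(\vec E)<3$.
   Context: $s\in\mathbb{R}^{N\times d}$ and $\vec r\in\mathbb{R}^{N\times3}$ have rows $s_i$ and $\vec r_i\in\mathbb{R}^{1\times 3}$. $\mathrm{O}(3)=\{Q\in\mathbb{R}^{3\times3}:QQ^T=I\}$ and $I$ is the identity. A local environment is a finite set of pairs $(s',x)$ with $s'\in\mathbb{R}^d$, $x\in\mathbb{R}^{1\times 3}$. $g$ being $\mathrm{O}(3)$-equivariant means $g(\{(s',xo^T):(s',x)\in A\})=g(A)o^T$ for all $o\in\mathrm{O}(3)$ and all local environments $A$. *)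

From HB Require Import structures.
From mathcomp Require Import all_boot all_order all_algebra.
From mathcomp Require Import finmap.
From mathcomp Require Import reals.

Set Implicit Arguments.
Unset Strict Implicit.
Unset Printing Implicit Defensive.

Import Order.TTheory GRing.Theory Num.Theory.
Local Open Scope ring_scope.

Definition local_env (R : realType) (d : nat) :=
  {fset ('rV[R]_d * 'rV[R]_3)}.

Definition orthogonal3 (R : realType) (o : 'M[R]_3) : Prop :=
  o *m o^T = 1%:M.

Definition act_env (R : realType) (d : nat) (o : 'M[R]_3)
  (A : local_env R d) : local_env R d :=
  [fset (p.1, p.2 *m o^T) | p in A]%fset.

Definition O3_equivariant (R : realType) (d : nat)
  (g : local_env R d -> 'M[R]_3) : Prop :=
  forall (o : 'M[R]_3) (A : local_env R d),
    orthogonal3 o -> g (act_env o A) = g A *m o^T.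

Definition trivial_stabilizer (R : realType) (d : nat) (A : local_env R d)
  : Prop :=
  forall o : 'M[R]_3, orthogonal3 o -> act_env o A = A -> o = 1%:M.

Definition full_env (R : realType) (d N : nat) (s : 'M[R]_(N, d))
  (r : 'M[R]_(N, 3)) (i : 'I_N) : local_env R d :=
  [fset (row j s, row i r - row j r) | j : 'I_N]%fset.

From HB Require Import structures.
From mathcomp Require Import all_boot all_order all_algebra.
From mathcomp Require Import finmap.
From mathcomp Require Import reals.
Import Order.TTheory GRing.Theory Num.Theory.
Local Open Scope ring_scope.

(* If rank E_i < 3, the environment of atom i has a nontrivial stabilizer o.
   Because the positions are distinct and every environment contains all atoms,
   o permutes the atoms: r_i - r_(pi j) = (r_i - r_j) o^T with s_(pi j) = s_j.
   Then o maps the environment of every atom k onto that of pi k, so by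
   equivariance E o^T is E with its summands permuted, i.e. E o^T = E.
   A full-rank E is invertible, which would force o = I. *)

Lemma unitmx_mulmx_fixed_eq1 {R : comUnitRingType} {n : nat} (M A : 'M[R]_n) :
  M \in unitmx -> M *m A = M -> A = 1%:M.
Proof. by move=> Mu MA; rewrite -(mulKmx Mu A) MA mulVmx. Qed.

Lemma orthogonal3_trC {R : realType} (o : 'M[R]_3) :
  orthogonal3 o -> o^T *m o = 1%:M.
Proof. exact: mulmx1C. Qed.

Section StabilizerPermutesAtoms.
Context {R : realType} {d N : nat} {s : 'M[R]_(N, d)} {r : 'M[R]_(N, 3)}.
Hypothesis r_inj : forall i j : 'I_N, row i r = row j r -> i = j.
Context {i : 'I_N} {o : 'M[R]_3}.
Hypothesis o_orth : orthogonal3 o.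
Hypothesis o_stab : act_env o (full_env s r i) = full_env s r i.

Let image_atom j k :=
  (row k s, row i r - row k r) == (row j s, (row i r - row j r) *m o^T).

Lemma exists_image_atom j : exists k, image_atom j k.
Proof.
have : (row j s, (row i r - row j r) *m o^T) \in act_env o (full_env s r i).
  by apply/imfsetP; exists (row j s, row i r - row j r); rewrite ?in_imfset.
by rewrite o_stab => /imfsetP [k _ /= ek]; exists k; rewrite /image_atom ek.
Qed.

Definition stab_perm j := odflt j [pick k | image_atom j k].

Lemma stab_permP j : image_atom j (stab_perm j).
Proof.
rewrite /stab_perm; case: pickP => [//|none].
by have [k] := exists_image_atom j; rewrite none.
Qed.

Lemma row_s_stab_perm j : row (stab_perm j) s = row j s.
Proof. by have /eqP [] := stab_permP j. Qed.

Lemma row_r_stab_perm j :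
  row i r - row (stab_perm j) r = (row i r - row j r) *m o^T.
Proof. by have /eqP [] := stab_permP j. Qed.

Lemma stab_perm_inj : injective stab_perm.
Proof.
move=> j1 j2 e; apply: r_inj; apply: oppr_inj; apply: (addrI (row i r)).
rewrite -[_ - row j1 r]mulmx1 -[_ - row j2 r]mulmx1 -(orthogonal3_trC _ o_orth).
by rewrite !mulmxA -!row_r_stab_perm e.
Qed.

Lemma rowB_stab_perm k j :
  (row k r - row j r) *m o^T = row (stab_perm k) r - row (stab_perm j) r.
Proof.
have shift l m : row l r - row m r = (row i r - row m r) - (row i r - row l r).
  by rewrite opprB [RHS]addrC addrA subrK.
by rewrite shift mulmxBl -!row_r_stab_perm -shift.
Qed.

Lemma act_full_env k :
  act_env o (full_env s r k) = full_env s r (stab_perm k).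
Proof.
apply/fsetP => x; apply/idP/idP.
- case/imfsetP => _ /imfsetP [j _ ->] -> /=.
  by rewrite rowB_stab_perm -row_s_stab_perm in_imfset.
- case/imfsetP => j _ ->.
  rewrite -(f_invF stab_perm_inj j) row_s_stab_perm -rowB_stab_perm.
  by apply/imfsetP; exists (row (invF stab_perm_inj j) s,
                           row k r - row (invF stab_perm_inj j) r);
     rewrite ?in_imfset.
Qed.

Lemma sum_full_env_stabilized {g : local_env R d -> 'M[R]_3} :
  O3_equivariant g ->
  (\sum_(k < N) g (full_env s r k)) *m o^T = \sum_(k < N) g (full_env s r k).
Proof.
move=> g_equiv; rewrite mulmx_suml [RHS](reindex_inj stab_perm_inj).
by apply: eq_bigr => k _; rewrite -act_full_env (g_equiv _ _ o_orth).
Qed.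

End StabilizerPermutesAtoms.

Lemma full_rank_sum_trivial_stabilizer {R : realType} {d N : nat}
    {s : 'M[R]_(N, d)} {r : 'M[R]_(N, 3)}
    {g : local_env R d -> 'M[R]_3} (i : 'I_N) :
  (forall j k : 'I_N, row j r = row k r -> j = k) -> O3_equivariant g ->
  \rank (\sum_(k < N) g (full_env s r k))%R = 3%N ->
  trivial_stabilizer (full_env s r i).
Proof.
move=> r_inj g_equiv full o o_orth o_stab.
have E_unit : (\sum_(k < N) g (full_env s r k)) \in unitmx.
  by rewrite -row_full_unit /row_full full.
apply: trmx_inj; rewrite trmx1.
exact: unitmx_mulmx_fixed_eq1 _ _ E_unit
         (sum_full_env_stabilized r_inj o_orth o_stab g_equiv).
Qed.

Theorem corollary1 (R : realType) (d N : nat)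
  (s : 'M[R]_(N, d)) (r : 'M[R]_(N, 3))
  (hdistinct : forall i j : 'I_N, row i r = row j r -> i = j)
  (g : local_env R d -> 'M[R]_3)
  (hequiv : O3_equivariant g)
  (hrank : forall A : local_env R d, trivial_stabilizer A -> \rank (g A) = 3%N)
  (hi : exists i : 'I_N, (\rank (g (full_env s r i)) < 3)%N) :
  (\rank (\sum_(i < N) g (full_env s r i))%R < 3)%N.
Proof.
case: hi => i rank_i; rewrite ltn_neqAle rank_leq_col andbT.
apply/eqP => full.
have stab_i := full_rank_sum_trivial_stabilizer i hdistinct hequiv full.
by rewrite hrank // ltnn in rank_i.
Qed.
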